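(* Let $\mathscr{F}$ be a family of languages closed under rational transduction, union, product and Kleene closure. Let $S$ be a semigroup, $I, J$ sets, $P$ a $J \times I$ matrix with entries in $S \cup \{0\}$, and suppose $M = M^0(S; I, J; P)$ is finitely generated. If $L_\sigma(S) \in \mathscr{F}$ for some finite choice of generators $\sigma$ of $S$, then $L_\tau(M) \in \mathscr{F}$ for every finite choice of generators $\tau$ of $M$.
   Context: The Rees matrix semigroup with zero $M^0(S; I, J; P)$ (where $0 \notin S$) has elements $(I \times S \times J) \cup \{0\}$, $0$ is a zero, and $(i_1, g_1, j_1)(i_2, g_2, j_2) = (i_1, g_1 P_{j_1 i_2} g_2, j_2)$ if $P_{j_1 i_2} \in S$ and $=0$ if $P_{j_1 i_2} = 0$. For a semigroup $S$, $S^1$ denotes the monoid obtained by adjoining a new identity $1$ (even if $S$ already has one). A choice of generators for $S$ is a surjective morphism $\sigma : X^+ \to S$ from a free semigroup, finite if $X$ is finite; it extends uniquely to $\sigma^1 : X^* \to S^1$. Let $\overline{X} = \{\overline{x} : x \in X\}$ be a set of formal inverses, $\hat{X} = X \cup \overline{X}$. The loop automaton of $S$ with respect to $\sigma$ is the directed labelled graph with vertex set $S^1$, having for each $a \in S^1$ and $x \in X$ an edge from $a$ to $a(x\sigma)$ labelled $x$ and an edge from $a(x\sigma)$ to $a$ labelled $\overline{x}$. The loop problem $L_\sigma(S) \subseteq \hat{X}^*$ is the set of words labelling paths from $1$ to $1$ in this graph (including the empty word). A rational transduction is a relation between free monoids realised by a finite-state transducer. *)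

From mathcomp Require Import all_boot.
Set Implicit Arguments. Unset Strict Implicit. Unset Printing Implicit Defensive.

Definition lang (X : Type) := seq X -> Prop.

Definition lang_cat (X : Type) (L1 L2 : lang X) : lang X :=
  fun w => exists u v, w = u ++ v /\ L1 u /\ L2 v.

Inductive kstar (X : Type) (L : lang X) : seq X -> Prop :=
| kstar_nil : kstar L [::]
| kstar_cons u w : L u -> kstar L w -> kstar L (u ++ w).

Definition associative_op (T : Type) (mul : T -> T -> T) :=
  forall a b c, mul a (mul b c) = mul (mul a b) c.

Section Generators.
Variables (T : Type) (mul : T -> T -> T) (X : Type) (sigma : X -> T).

(** The image under sigma^+ : X^+ -> T of the nonempty word x :: w. *)
Definition word_eval (x : X) (w : seq X) : T :=
  foldl (fun a y => mul a (sigma y)) (sigma x) w.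

Definition generates : Prop := forall t, exists x w, word_eval x w = t.

(** S^1 = option T, with None the adjoined identity 1; right multiplication
    of a : S^1 by s : S. *)
Definition mul1 (a : option T) (s : T) : option T :=
  match a with None => Some s | Some a' => Some (mul a' s) end.

(** Hat X = X + X : inl x is x, inr x is the formal inverse xbar.
    Edges of the loop automaton: a --x--> a(x sigma), a(x sigma) --xbar--> a. *)
Definition loop_edge (a : option T) (l : X + X) (b : option T) : Prop :=
  match l with
  | inl x => b = mul1 a (sigma x)
  | inr x => a = mul1 b (sigma x)
  end.

Fixpoint loop_path (a : option T) (w : seq (X + X)) (b : option T) : Prop :=
  match w with
  | [::] => a = b
  | l :: w' => exists c, loop_edge a l c /\ loop_path c w' b
  end.

Definition loop_problem : lang (X + X) := fun w => loop_path None w None.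
End Generators.

Record transducer (X Y : finType) := Transducer {
  tstate : finType;
  tinit : tstate;
  tfinal : pred tstate;
  ttrans : seq (tstate * seq X * seq Y * tstate)
}.

Inductive trun (X Y : finType) (T : transducer X Y) :
  tstate T -> seq X -> seq Y -> tstate T -> Prop :=
| trun_nil (q : tstate T) : @trun X Y T q [::] [::] q
| trun_cons (q : tstate T) (u : seq X) (v : seq Y) (q1 : tstate T)
    (u' : seq X) (v' : seq Y) (q' : tstate T) :
    (q, u, v, q1) \in ttrans T -> @trun X Y T q1 u' v' q' ->
    @trun X Y T q (u ++ u') (v ++ v') q'.

Definition transduce (X Y : finType) (T : transducer X Y) (L : lang X) : lang Y :=
  fun v => exists u (q : tstate T), L u /\ tfinal q /\ @trun X Y T (tinit T) u v q.

Definition lang_family := forall X : finType, lang X -> Prop.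

Definition closed_under_rat_trans (F : lang_family) : Prop :=
  forall (X Y : finType) (T : transducer X Y) (L : lang X),
    F X L -> F Y (transduce T L).
Definition closed_under_union (F : lang_family) : Prop :=
  forall (X : finType) (L1 L2 : lang X),
    F X L1 -> F X L2 -> F X (fun w => L1 w \/ L2 w).
Definition closed_under_product (F : lang_family) : Prop :=
  forall (X : finType) (L1 L2 : lang X),
    F X L1 -> F X L2 -> F X (lang_cat L1 L2).
Definition closed_under_star (F : lang_family) : Prop :=
  forall (X : finType) (L : lang X), F X L -> F X (kstar L).

(** Rees matrix semigroup with zero M^0(S; I, J; P): carrier
    option (I * S * J), None being the zero; P j i = None means P_{ji} = 0. *)
Definition rees_mul (S I J : Type) (mul : S -> S -> S) (P : J -> I -> option S)
  (a b : option (I * S * J)) : option (I * S * J) :=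
  match a, b with
  | Some (i1, g1, j1), Some (i2, g2, j2) =>
      match P j1 i2 with
      | Some p => Some (i1, mul (mul g1 p) g2, j2)
      | None => None
      end
  | _, _ => None
  end.

From HB Require Import structures.
From mathcomp Require Import all_boot boolp.
Set Implicit Arguments. Unset Strict Implicit. Unset Printing Implicit Defensive.

(* A loop from 1 to 1 in the loop automaton of M splits into first-return segments, which
   leave 1 at once and come back to it only at their end; hence L_tau(M) is the Kleene star
   of any language that contains every first-return segment and is contained in L_tau(M).
   Such a language is the image of L_sigma(S) under a transducer that reads a loop of S and
   writes a segment. Its finite state records whether the current element of M is 1, 0 or
   nonzero, and for a nonzero element (i, h, j) two generators of M with row i and column j
   (I and J need not be finite); the entry h is carried by the state of the loop automaton
   of S traversed by the input. Right multiplication by a generator is simulated by reading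
   a word for the corresponding factor of S, and its undoing by reading that word backwards.
   While the element is 0 the input is unconstrained, so the S-state can be moved anywhere. *)

Section LoopAutomaton.
Context {T : Type} {mul : T -> T -> T} {X : Type} {sigma : X -> T}.
Local Notation path := (loop_path mul sigma).
Local Notation edge := (loop_edge mul sigma).

Lemma loop_path1 a l b : path a [:: l] b <-> edge a l b.
Proof. by split=> [[c [e <-]]|e]; last exists b. Qed.

Lemma loop_path_cat a u v b :
  path a (u ++ v) b <-> exists2 c, path a u c & path c v b.
Proof.
elim: u a => [|l u IH] a /=; first by split=> [|[c -> //]]; exists a.
split=> [[c [e /IH [d p1 p2]]]|[d [c [e p1]] p2]]; first by exists d => //; exists c.
by exists c; split => //; apply/IH; exists d.
Qed.

Definition mul1_word (a : option T) (w : seq X) : option T :=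
  foldl (fun b x => mul1 mul b (sigma x)) a w.

Lemma loop_path_inl a w b : path a (map inl w) b <-> b = mul1_word a w.
Proof.
elim: w a => [|x w IH] a /=; first by split=> ->.
split=> [[c [-> /IH //]]|E].
by exists (mul1 mul a (sigma x)); split => //; apply/IH.
Qed.

Lemma loop_path_inr_rev a w b : path a (map inr (rev w)) b <-> a = mul1_word b w.
Proof.
elim: w a b => [|x w IH] a b /=; first by split=> ->.
rewrite rev_cons -cats1 map_cat loop_path_cat /=.
split=> [[c /IH -> [d [-> <-]]] //|->].
by exists (mul1 mul b (sigma x)); [apply/IH | exists b].
Qed.

Lemma loop_path_retrace a x b :
  path a [:: inr x; inl x] b <-> a = b /\ exists c, a = mul1 mul c (sigma x).
Proof.
split=> [[c [-> [d [-> <-]]]]|[<- [c ->]]]; first by split; last exists c.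
by exists c; split => //; exists (mul1 mul c (sigma x)).
Qed.

Lemma loop_edge_from_one l c : edge None l c -> c <> None.
Proof. by case: l => x /=; [move->|case: c]. Qed.

Fixpoint first_return (a : option T) (w : seq (X + X)) : Prop :=
  if w is l :: w' then a <> None /\ exists2 c, edge a l c & first_return c w'
  else a = None.

Lemma loop_problem_star (K : lang (X + X)) :
  (forall l c w, edge None l c -> first_return c w -> K (l :: w)) ->
  (forall w, K w -> loop_problem mul sigma w) ->
  loop_problem mul sigma = kstar K.
Proof.
move=> Kfirst Kloop; apply/funext => w; apply/propext; split; last first.
  by elim=> // u v /Kloop Ku _ Kv; apply/loop_path_cat; exists None.
suff split_loop : forall a, path a w None -> (a = None -> kstar K w) /\
    (a <> None -> exists w1 w2, [/\ w = w1 ++ w2, first_return a w1 & kstar K w2]).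
  by move=> Lw; have [+ _] := split_loop None Lw; apply.
elim: w => [|l w IH] a /=; first by move=> ->; split=> //; constructor.
move=> [c [e /IH [IHone IHoff]]]; split=> [a1|aN].
  subst a; have [w1 [w2 [-> fr1 Kw2]]] := IHoff (loop_edge_from_one e).
  by rewrite -cat_cons; constructor => //; apply: Kfirst fr1.
case: c => [t|] in e IHone IHoff *; last first.
  by exists [:: l], w; split; [|split => //; exists None | exact: IHone].
have /IHoff [w1 [w2 [-> fr1 Kw2]]] : Some t <> None by [].
by exists (l :: w1), w2; split => //; split => //; exists (Some t).
Qed.

Section Generated.
Hypotheses (mulA : associative_op mul) (sigma_gen : generates mul sigma).

Lemma mul1_last_generator t :
  exists a x, Some t = mul1 mul a (sigma x).
Proof.
have [x [w <-]] := sigma_gen t; case/lastP: w => [|w y]; first by exists None, x.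
by exists (Some (word_eval mul sigma x w)), y; rewrite /word_eval foldl_rcons.
Qed.

Lemma mul1A a t u : mul1 mul (mul1 mul a t) u = mul1 mul a (mul t u).
Proof. by case: a => //= a; rewrite mulA. Qed.

Lemma mul1_word_cons a x w :
  mul1_word a (x :: w) = mul1 mul a (word_eval mul sigma x w).
Proof.
rewrite /mul1_word /word_eval /=.
by elim: w (sigma x) => //= y w IH t; rewrite mul1A.
Qed.

Lemma exists_word t : exists p : X * seq X, word_eval mul sigma p.1 p.2 = t.
Proof. by have [x [w <-]] := sigma_gen t; exists (x, w). Qed.

Definition spell (o : option T) : seq X :=
  if o is Some t then let p := sval (cid (exists_word t)) in p.1 :: p.2 else [::].

Lemma mul1_word_spell a t : mul1_word a (spell (Some t)) = mul1 mul a t.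
Proof. by rewrite /spell; case: cid => -[x w] /= <-; apply: mul1_word_cons. Qed.

Lemma mul1_word_one_spell o : mul1_word None (spell o) = o.
Proof. by case: o => // t; rewrite mul1_word_spell. Qed.

Lemma loop_path_connected a b : exists w, path a w b.
Proof.
exists (map inr (rev (spell a)) ++ map inl (spell b)); apply/loop_path_cat.
by exists None; [apply/loop_path_inr_rev | apply/loop_path_inl]; rewrite mul1_word_one_spell.
Qed.
End Generated.
End LoopAutomaton.

Arguments first_return {T} mul {X} sigma.

Section Transducers.
Variables (X Y : finType).

Lemma trun_cat (T : transducer X Y) q u v q1 u' v' q' :
  @trun _ _ T q u v q1 -> @trun _ _ T q1 u' v' q' -> @trun _ _ T q (u ++ u') (v ++ v') q'.
Proof. by elim=> // {}q u0 v0 q2 u1 v1 q3 t _ IH /IH; rewrite -!catA; apply: trun_cons t. Qed.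

Variables (Q K : finType) (q0 : Q) (final : pred Q).
Variables (valid : K -> Prop) (step : K -> Q * seq X * seq Y * Q).

Definition transducer_of_moves : transducer X Y :=
  @Transducer X Y Q q0 final [seq step k | k <- enum K & `[< valid k >]].

Lemma transducer_of_movesP t :
  t \in ttrans transducer_of_moves <-> exists2 k, valid k & t = step k.
Proof.
split=> [/mapP [k]|[k vk ->]].
  by rewrite mem_filter => /andP [/asboolP vk _] ->; exists k.
by apply: map_f; rewrite mem_filter mem_enum andbT; apply/asboolP.
Qed.

Lemma trun_move k q u v q1 u' v' q' : valid k -> step k = (q, u, v, q1) ->
  @trun _ _ transducer_of_moves q1 u' v' q' ->
  @trun _ _ transducer_of_moves q (u ++ u') (v ++ v') q'.
Proof. by move=> vk ek; apply: trun_cons; apply/transducer_of_movesP; exists k. Qed.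
End Transducers.

Section ReesLoopProblem.
Variables (S : Type) (mul : S -> S -> S) (I J : Type) (P : J -> I -> option S).
Hypothesis mulA : associative_op mul.
Local Notation M := (option (I * S * J)).
Local Notation rmul := (rees_mul mul P).

Lemma rees_mul_SomeP u v i h j : rmul u v = Some (i, h, j) ->
  (exists h1 j1, u = Some (i, h1, j1)) /\ (exists i2 h2, v = Some (i2, h2, j)).
Proof.
case: u v => [[[i1 h1] j1]|] [[[i2 h2] j2]|] //=; case: (P j1 i2) => // p [<- _ <-].
by split; [exists h1, j1 | exists i2, h2].
Qed.

Variables (Y : finType) (tau : Y -> M).
Hypothesis tau_gen : generates rmul tau.

Definition row y : option I := if tau y is Some (i, _, _) then Some i else None.
Definition col y : option J := if tau y is Some (_, _, j) then Some j else None.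
Definition entry y : option S := if tau y is Some (_, g, _) then Some g else None.

Definition rfactor b y : option S :=
  match col b, tau y with
  | Some j, Some (i, g, _) => if P j i is Some p then Some (mul p g) else None
  | _, _ => None
  end.

Lemma rfactor_col b y t : rfactor b y = Some t -> exists j, col b = Some j.
Proof. by rewrite /rfactor; case: (col b) => [j|] // _; exists j. Qed.

Lemma rees_mul_tau_Some b y i h j t : col b = Some j -> rfactor b y = Some t ->
  exists2 j', col y = Some j' & rmul (Some (i, h, j)) (tau y) = Some (i, mul h t, j').
Proof.
rewrite /rfactor /col => ->; case: (tau y) => [[[i' g] j']|] //=.
by case: (P j i') => // p [<-]; exists j'; rewrite // mulA.
Qed.

Lemma rees_mul_tau_None b y i h j : col b = Some j -> rfactor b y = None ->
  rmul (Some (i, h, j)) (tau y) = None.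
Proof.
rewrite /rfactor /col => ->; case: (tau y) => [[[i' g] j']|] //=.
by case: (P j i').
Qed.

Lemma row_generator (i : I) (h : S) (j : J) : exists a, row a = Some i.
Proof.
have [x [w]] := tau_gen (Some (i, h, j)).
suff first_factor : forall u, foldl (fun a y => rmul a (tau y)) u w = Some (i, h, j) ->
    exists h1 j1, u = Some (i, h1, j1).
  by move=> /first_factor [h1 [j1 E]]; exists x; rewrite /row E.
by elim: w => [|y w IH] u /=; [move->; exists h, j | move=> /IH [h1 [j1 /rees_mul_SomeP []]]].
Qed.

Lemma col_generator (i : I) (h : S) (j : J) : exists b, col b = Some j.
Proof.
have [x [w]] := tau_gen (Some (i, h, j)); rewrite /word_eval.
case/lastP: w => [|w z] /=; first by move=> E; exists x; rewrite /col E.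
by rewrite foldl_rcons => /rees_mul_SomeP [_ [i2 [h2 E]]]; exists z; rewrite /col E.
Qed.

Variables (X : finType) (sigma : X -> S).
Hypothesis sigma_gen : generates mul sigma.
Local Notation word := (spell sigma_gen).
Local Notation spath := (loop_path mul sigma).
Local Notation rpath := (loop_path rmul tau).
Local Notation redge := (loop_edge rmul tau).

Inductive state := Start | Col of Y & Y | Zero | Done.

Definition state_code (q : state) : option (Y * Y + bool) :=
  match q with
  | Start => None | Col a b => Some (inl (a, b))
  | Zero => Some (inr false) | Done => Some (inr true)
  end.

Definition state_decode (c : option (Y * Y + bool)) : state :=
  match c with
  | None => Start | Some (inl (a, b)) => Col a b
  | Some (inr false) => Zero | Some (inr true) => Done
  end.

Lemma state_codeK : cancel state_code state_decode. Proof. by case. Qed.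

HB.instance Definition _ := Finite.copy state (can_type state_codeK).

Inductive move :=
  | FromStart of Y
  | Fwd of Y & Y & Y
  | Bwd of Y & Y & Y & Y & X
  | BwdDone of Y & Y & Y
  | ZeroEdge of Y + Y
  | ZeroRead of X + X
  | ZeroBwd of Y & Y & Y & X
  | ZeroBwdDone of Y.

Definition move_code (k : move) :
    (Y + Y * Y * Y) + (Y * Y * Y * Y * X + Y * Y * Y) +
    ((Y + Y) + (X + X) + (Y * Y * Y * X + Y)) :=
  match k with
  | FromStart y => inl (inl (inl y))
  | Fwd a b y => inl (inl (inr (a, b, y)))
  | Bwd a b c y x => inl (inr (inl (a, b, c, y, x)))
  | BwdDone a b y => inl (inr (inr (a, b, y)))
  | ZeroEdge l => inr (inl (inl l))
  | ZeroRead l => inr (inl (inr l))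
  | ZeroBwd a b y x => inr (inr (inl (a, b, y, x)))
  | ZeroBwdDone y => inr (inr (inr y))
  end.

Definition move_decode c : move :=
  match c with
  | inl (inl (inl y)) => FromStart y
  | inl (inl (inr (a, b, y))) => Fwd a b y
  | inl (inr (inl (a, b, c, y, x))) => Bwd a b c y x
  | inl (inr (inr (a, b, y))) => BwdDone a b y
  | inr (inl (inl l)) => ZeroEdge l
  | inr (inl (inr l)) => ZeroRead l
  | inr (inr (inl (a, b, y, x))) => ZeroBwd a b y x
  | inr (inr (inr y)) => ZeroBwdDone y
  end.

Lemma move_codeK : cancel move_code move_decode. Proof. by case. Qed.

HB.instance Definition _ := Finite.copy move (can_type move_codeK).

Definition valid (k : move) : Prop :=
  match k with
  | Bwd _ b c y _ => col b = col y /\ rfactor c y <> None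
  | BwdDone a b y => row a = row y /\ col b = col y
  | ZeroBwd a b y _ => [/\ row a <> None, col b <> None & rfactor b y = None]
  | ZeroBwdDone y => tau y = None
  | _ => True
  end.

Definition step (k : move) : state * seq (X + X) * seq (Y + Y) * state :=
  match k with
  | FromStart y =>
      (Start, map inl (word (entry y)), [:: inl y], if entry y is Some _ then Col y y else Zero)
  | Fwd a b y =>
      (Col a b, map inl (word (rfactor b y)), [:: inl y],
       if rfactor b y is Some _ then Col a y else Zero)
  | Bwd a b c y x =>
      (* the final [:: inr x; inl x] only checks that the S-state is not the adjoined 1 *)
      (Col a b, map inr (rev (word (rfactor c y))) ++ [:: inr x; inl x], [:: inr y], Col a c)
  | BwdDone a b y => (Col a b, map inr (rev (word (entry y))), [:: inr y], Done)
  | ZeroEdge l => (Zero, [::], [:: l], Zero)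
  | ZeroRead l => (Zero, [:: l], [::], Zero)
  | ZeroBwd a b y x => (Zero, [:: inl x], [:: inr y], Col a b)
  | ZeroBwdDone y => (Zero, [::], [:: inr y], Done)
  end.

Definition rees_transducer := transducer_of_moves Start (pred1 Done) valid step.
Local Notation run := (@trun _ _ rees_transducer).

Definition inv (q : state) (s : option S) (m : option M) : Prop :=
  match q with
  | Start => s = None /\ m = None
  | Col a b => exists i h j,
      [/\ row a = Some i, col b = Some j, s = Some h & m = Some (Some (i, h, j))]
  | Zero => m = Some None
  | Done => m = None
  end.

Definition sound_transition q u v q' :=
  forall s s' m, inv q s m -> spath s u s' -> (q' = Done -> s' = None) ->
  exists2 m', rpath m v m' & inv q' s' m'.

Lemma step_sound k q u v q' : valid k -> step k = (q, u, v, q') -> sound_transition q u v q'.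
Proof.
case: k => [y|a b y|a b c y x|a b y|l|l|a b y x|y] /= vk [<- <- <- <-] s s' m.
- case=> -> -> /loop_path_inl ->; rewrite (mul1_word_one_spell mulA) => _.
  exists (Some (tau y)); first by apply/loop_path1.
  by rewrite /entry; case E: (tau y) => [[[i g] j]|] //; exists i, g, j; rewrite /row /col E.
- case=> i [h [j [ra cb -> ->]]] /loop_path_inl -> _.
  exists (Some (rmul (Some (i, h, j)) (tau y))); first by apply/loop_path1.
  case E: (rfactor b y) => [t|]; last by rewrite (rees_mul_tau_None i h cb E).
  have [j' cy ->] := rees_mul_tau_Some i h cb E.
  by rewrite (mul1_word_spell mulA); exists i, (mul h t), j'.
- case: vk => cby; case E: (rfactor c y) => [t|] // _.
  case=> i [h [j [ra cb -> ->]]] /loop_path_cat [s1 + /loop_path_retrace [<- [d s1d]]] _.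
  case: s1 s1d => [h0 _|]; last by case: d.
  move/loop_path_inr_rev; rewrite (mul1_word_spell mulA) => -[->].
  have [j0 cc] := rfactor_col E; have [j' cy Em] := rees_mul_tau_Some i h0 cc E.
  exists (Some (Some (i, h0, j0))); last by exists i, h0, j0.
  by apply/loop_path1; apply: (congr1 Some); rewrite Em; move: cby; rewrite cb cy => -[->].
- case: vk => rab cby.
  case=> i [h [j [ra cb -> ->]]] + /(_ erefl) s'N; rewrite s'N.
  move/loop_path_inr_rev; rewrite (mul1_word_one_spell mulA) => ey.
  exists None => //; apply/loop_path1 => /=.
  move: rab cby ey; rewrite ra cb /row /col /entry.
  by case: (tau y) => [[[i' g] j']|] //= [<-] [<-] [<-].
- by move=> -> <- _; exists (Some None) => //; apply/loop_path1; case: l.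
- by move=> -> _ _; exists (Some None).
- case: vk => ra cb rby; move=> -> [_ [-> <-]] _.
  have [h ->] : exists h, mul1 mul s (sigma x) = Some h by case: s; eexists.
  case E1: (row a) ra => [i|] // _; case E2: (col b) cb => [j|] // _.
  exists (Some (Some (i, h, j))); last by exists i, h, j.
  by apply/loop_path1; apply: (congr1 Some); rewrite (rees_mul_tau_None i h E2 rby).
- by move=> -> _ /(_ erefl) ->; exists None => //; apply/loop_path1; rewrite /= vk.
Qed.

Lemma trun_from_Done q u v q' : run q u v q' -> q = Done -> u = [::].
Proof.
case=> // q0 u0 v0 q1 u1 v1 q2 /transducer_of_movesP [k _ Ek] _ q0D.
by move: Ek; rewrite q0D; case: k.
Qed.

Lemma trun_sound q u v q' : run q u v q' -> forall s m, inv q s m ->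
  spath s u None -> q' = Done -> rpath m v None.
Proof.
elim=> [q0|q0 u0 v0 q1 u1 v1 q2 /transducer_of_movesP [k vk Ek] r IH] s m.
  by move=> inv0 _ q0D; rewrite q0D in inv0.
move=> inv0 /loop_path_cat [s1 p0 p1] q2D.
have s1N : q1 = Done -> s1 = None by move=> q1D; move: p1; rewrite (trun_from_Done r q1D).
have [m1 r0 inv1] := step_sound vk (esym Ek) inv0 p0 s1N.
by apply/loop_path_cat; exists m1 => //; apply: IH inv1 p1 q2D.
Qed.

Definition accepts q s w := exists2 u, run q u w Done & spath s u None.

Lemma accepts_move k q u v q1 s s1 w : valid k -> step k = (q, u, v, q1) ->
  spath s u s1 -> accepts q1 s1 w -> accepts q s (v ++ w).
Proof.
move=> vk Ek p [u' r p']; exists (u ++ u'); first exact: trun_move vk Ek r.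
by apply/loop_path_cat; exists s1.
Qed.

Lemma accepts_Done : accepts Done None [::].
Proof. by exists [::]; first exact: trun_nil. Qed.

Lemma accepts_Zero_any s s' w : accepts Zero s' w -> accepts Zero s w.
Proof.
have [r p] := loop_path_connected mulA sigma_gen s s'.
have read_r : run Zero r [::] Zero.
  elim: r {p} => [|l r IH]; first exact: trun_nil.
  exact: (trun_move (k := ZeroRead l) Logic.I erefl IH).
move=> [u ru pu]; exists (r ++ u); first exact: trun_cat read_r ru.
by apply/loop_path_cat; exists s'.
Qed.

Lemma accepts_Col_fwd a b s m y c w : inv (Col a b) s m -> redge m (inl y) c ->
  (c <> None -> forall q s', inv q s' c -> accepts q s' w) ->
  accepts (Col a b) s (inl y :: w).
Proof.
case=> i [h [j [ra cb -> ->]]] e IHc.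
have {e} ce : c = Some (rmul (Some (i, h, j)) (tau y)) := e; subst c.
case E: (rfactor b y) => [t|].
  have [j' cy Em] := rees_mul_tau_Some i h cb E.
  apply: (accepts_move (k := Fwd a b y) (s1 := Some (mul h t)) Logic.I erefl).
    by apply/loop_path_inl; rewrite E (mul1_word_spell mulA).
  by rewrite E; apply: IHc => //; rewrite Em; exists i, (mul h t), j'.
apply: (accepts_move (k := Fwd a b y) (s1 := Some h) Logic.I erefl); first by rewrite E.
by rewrite E; apply: IHc => //; rewrite (rees_mul_tau_None i h cb E).
Qed.

Lemma accepts_Col_bwd a b s m y c w : inv (Col a b) s m -> redge m (inr y) c ->
  first_return rmul tau c w -> (c <> None -> forall q s', inv q s' c -> accepts q s' w) ->
  accepts (Col a b) s (inr y :: w).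
Proof.
case=> i [h [j [ra cb -> ->]]] e fr IHc.
case: c e fr IHc => [[[[i0 h0] j0]|]|] e fr IHc; last 2 first.
- by move/Some_inj: e.
- move/Some_inj: e => ty; have -> : w = [::] by case: w {IHc} fr => // l w [].
  apply: (accepts_move (k := BwdDone a b y) (s1 := None) _ erefl); last exact: accepts_Done.
    by split; rewrite ?ra ?cb /row /col -ty.
  by apply/loop_path_inr_rev; rewrite (mul1_word_one_spell mulA) /entry -ty.
move/Some_inj: e => e; have [z cz] := col_generator i0 h0 j0.
case E: (rfactor z y) => [t|]; last by rewrite (rees_mul_tau_None i0 h0 cz E) in e.
have [j' cy Em] := rees_mul_tau_Some i0 h0 cz E.
move: e; rewrite Em => -[ii hh jj]; subst i0 h j'.
have [d [x hd]] := mul1_last_generator sigma_gen h0.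
apply: (accepts_move (k := Bwd a b z y x) (s1 := Some h0) _ erefl).
- by split; rewrite ?cb ?cy ?E.
- apply/loop_path_cat; exists (Some h0); last by apply/loop_path_retrace; split; last exists d.
  by apply/loop_path_inr_rev; rewrite E (mul1_word_spell mulA).
- by apply: IHc => //; exists i, h0, j0.
Qed.

Lemma accepts_Zero_cons s l c w : redge (Some None) l c -> first_return rmul tau c w ->
  (c <> None -> forall q s', inv q s' c -> accepts q s' w) -> accepts Zero s (l :: w).
Proof.
case: l => y e fr IHc.
  have {e} ce : c = Some None := e; subst c.
  by apply: (accepts_move (k := ZeroEdge (inl y)) (s1 := s) Logic.I erefl) => //; apply: IHc.
case: c e fr IHc => [[[[i h] j]|]|] e fr IHc.
- move/Some_inj: e => e.
  have [a ra] := row_generator i h j; have [b cb] := col_generator i h j.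
  have rby : rfactor b y = None.
    case E: (rfactor b y) => [t|] //.
    by have [j' _ Em] := rees_mul_tau_Some i h cb E; rewrite Em in e.
  have [d [x hd]] := mul1_last_generator sigma_gen h.
  apply: (accepts_Zero_any s (s' := d)).
  apply: (accepts_move (k := ZeroBwd a b y x) (s1 := Some h) _ erefl).
  + by split; rewrite ?ra ?cb.
  + exact/loop_path1.
  + by apply: IHc => //; exists i, h, j.
- by apply: (accepts_move (k := ZeroEdge (inr y)) (s1 := s) Logic.I erefl) => //; apply: IHc.
- move/Some_inj: e => ty; have -> : w = [::] by case: w {IHc} fr => // l w [].
  apply: (accepts_Zero_any s (s' := None)).
  by apply: (accepts_move (k := ZeroBwdDone y) (s1 := None) _ erefl) => //; apply: accepts_Done.
Qed.

Lemma first_return_accepts w q s m : inv q s m -> m <> None ->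
  first_return rmul tau m w -> accepts q s w.
Proof.
elim: w q s m => [|l w IH] q s m iq mN /=; first by move/mN.
case=> _ [c e fr].
have IHc : c <> None -> forall q' s', inv q' s' c -> accepts q' s' w.
  by move=> cN q' s' iq'; apply: IH iq' cN fr.
case: q iq => [[_ /mN //]|a b iq|mZ|/mN //].
  by case: l e => y e; [apply: accepts_Col_fwd iq e IHc | apply: accepts_Col_bwd iq e fr IHc].
by rewrite mZ in e; apply: accepts_Zero_cons e fr IHc.
Qed.

Definition transduced : lang (Y + Y) := transduce rees_transducer (loop_problem mul sigma).

Lemma transduced_first_return l c w :
  redge None l c -> first_return rmul tau c w -> transduced (l :: w).
Proof.
case: l => y e; last by case: c e.
have {e} -> : c = Some (tau y) := e => fr.
suff [u ru pu] : accepts Start None (inl y :: w) by exists u, Done.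
apply: (accepts_move (k := FromStart y) (s1 := entry y) Logic.I erefl).
  by apply/loop_path_inl; rewrite (mul1_word_one_spell mulA).
apply: (first_return_accepts _ _ fr) => //.
by rewrite /entry; case ty: (tau y) => [[[i g] j]|] //; exists i, g, j; rewrite /row /col ty.
Qed.

Lemma transduced_loop v : transduced v -> loop_problem rmul tau v.
Proof. by case=> u [q [pu [/eqP qD ru]]]; apply: (trun_sound ru (conj erefl erefl) pu qD). Qed.

Lemma loop_problem_rees : loop_problem rmul tau = kstar transduced.
Proof. exact: loop_problem_star transduced_first_return transduced_loop. Qed.
End ReesLoopProblem.

Theorem theorem4p2 (F : lang_family)
  (HFtrans : closed_under_rat_trans F) (HFunion : closed_under_union F)
  (HFprod : closed_under_product F) (HFstar : closed_under_star F)
  (S : Type) (mul : S -> S -> S) (Hassoc : associative_op mul)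
  (I J : Type) (P : J -> I -> option S)
  (HMfg : exists (X : finType) (tau : X -> option (I * S * J)),
            generates (rees_mul mul P) tau) :
  (exists (X : finType) (sigma : X -> S),
      generates mul sigma /\ F (X + X)%type (loop_problem mul sigma)) ->
  forall (Y : finType) (tau : Y -> option (I * S * J)),
    generates (rees_mul mul P) tau ->
    F (Y + Y)%type (loop_problem (rees_mul mul P) tau).
Proof.
move=> [X [sigma [sigma_gen FLS]]] Y tau tau_gen.
by rewrite (loop_problem_rees Hassoc tau_gen sigma_gen); apply/HFstar/HFtrans.
Qed.
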